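(* Let $p\in(0,1)$ and let $N_j$ be the counting processes of Simon's model with parameter $p$. For every $\gamma\in(1,1/p)$ there exist constants $c=c(\gamma,p)>0$ and $\eta=\eta(\gamma,p)\in(0,1)$ such that $$\mathbb E\big[N_j(n)^\gamma\big]\le c\,(n/j)^\eta\qquad\text{for all integers }1\le j\le n.$$
   Context: Simon's model with parameter $p$: let $\varepsilon_1=0$ and let $(\varepsilon_i)_{i\ge2}$ be i.i.d. Bernoulli($p$) variables. Define indices $\pi(i)$ recursively: $\pi(1)=1$; for $i\ge2$, $\pi(i)=i$ if $\varepsilon_i=0$, and if $\varepsilon_i=1$, $\pi(i)=\pi(U_i)$ where $U_i$ is uniform on $\{1,\dots,i-1\}$, independent of everything else. The counting processes are $N_j(k)=\#\{1\le\ell\le k:\pi(\ell)=j\}$ for integers $j,k\ge1$. *)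

From Stdlib Require Import Reals List Arith.
Import ListNotations.
Open Scope R_scope.

(* Simon's model, exact finite law of (pi(1),...,pi(k)).
   A state is a list s with s = [pi(1); ...; pi(k)] (so nth (i-1) s = pi(i)).
   The law after k steps is a finite list of (probability weight, state).
   Step to index i = k+1 (>= 2): with prob. (1-p) (eps_i = 0) pi(i) = i;
   with prob. p * 1/(i-1) for each u in {1,...,i-1} (eps_i = 1, U_i = u)
   pi(i) = pi(u). *)
Definition simon_step (p : R) (d : list (R * list nat)) : list (R * list nat) :=
  flat_map (fun ws : R * list nat =>
    let (w, s) := ws in
    let i := S (length s) in
    (w * (1 - p), s ++ [i])
      :: map (fun u => (w * (p / INR (length s)), s ++ [nth (u - 1) s 0%nat]))
             (seq 1 (length s)))
  d.

Definition simon_law (p : R) (n : nat) : list (R * list nat) :=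
  Nat.iter (n - 1) (simon_step p) [(1, [1%nat])].

Definition Ncount (j : nat) (s : list nat) : nat := count_occ Nat.eq_dec s j.

(* x^g for x >= 0 with the convention 0^g = 0 (g > 0). *)
Definition rpow (x g : R) : R := if Rle_dec x 0 then 0 else Rpower x g.

Definition expect_Npow (p : R) (n j : nat) (gamma : R) : R :=
  fold_right (fun ws acc => fst ws * rpow (INR (Ncount j (snd ws))) gamma + acc)
             0 (simon_law p n).

From Stdlib Require Import Reals List Arith Lia Lra.
Import ListNotations.
Open Scope R_scope.

(* The proof is a supermartingale-type argument carried out on the exact
   finite law of (pi(1), ..., pi(n)).  Put eta := (p gamma + 1)/2, which lies
   in (p gamma, 1), and choose a shift a > 0 with p gamma exp(gamma/a) = eta.
   The potential phi(N) := (N + a)^gamma dominates N^gamma and satisfies the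
   drift inequality  p N (phi(N+1) - phi(N)) <= eta phi(N).
   At time n >= j, step n+1 creates a fresh index (never j) with probability
   1-p, and with probability p copies the label of a uniform earlier index,
   which is j with probability N_j(n)/n; hence
       E phi(N_j(n+1)) <= (1 + eta/n) E phi(N_j(n)).
   For n <= j we have N_j(n) <= 1, so E phi(N_j(n)) <= (1+a)^gamma.  Since
   1 + eta/(n+1) <= ((n+1)/n)^eta, iterating the drift bound from time j
   gives E phi(N_j(n)) <= 2 (1+a)^gamma (n/j)^eta. *)

Lemma exp_le_compat x y : x <= y -> exp x <= exp y.
Proof. intros [Hlt | <-]; [left; apply exp_increasing; exact Hlt | right; reflexivity]. Qed.

Lemma ln_le_compat x y : 0 < x -> x <= y -> ln x <= ln y.
Proof. intros Hx [Hlt | <-]; [left; apply ln_increasing; lra | right; reflexivity]. Qed.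

(* ln (1 + z) <= z, the logarithmic form of 1 + z <= exp z. *)
Lemma ln_1p_bounds z : 0 <= z -> 0 <= ln (1 + z) <= z.
Proof.
  intros Hz. split.
  - rewrite <- ln_1. apply ln_le_compat; lra.
  - destruct (Rle_dec (ln (1 + z)) z) as [Hle | Hgt]; [exact Hle |].
    apply Rnot_le_lt, exp_increasing in Hgt. rewrite exp_ln in Hgt by lra.
    pose proof (exp_ineq1_le z). lra.
Qed.

(* Convexity of exp at t: exp t - exp 0 <= t exp t. *)
Lemma exp_sub1_le t : 0 <= t -> exp t - 1 <= t * exp t.
Proof.
  intros Ht. pose proof (exp_ineq1_le (- t)) as Hm. rewrite exp_Ropp in Hm.
  pose proof (exp_pos t) as Hpos.
  assert (Hprod : (1 - t) * exp t <= 1).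
  { replace 1 with (/ exp t * exp t) at 2 by (field; lra).
    apply Rmult_le_compat_r; lra. }
  lra.
Qed.

Lemma Rpower_one_base e : Rpower 1 e = 1.
Proof. unfold Rpower. rewrite ln_1, Rmult_0_r. apply exp_0. Qed.

(* The growth factor 1 + e/(x+1) of one step is dominated by the ratio of
   e-th powers ((x+1)/x)^e; this makes the product of the factors telescope. *)
Lemma Rpower_succ_ratio x e : 0 < x -> 0 <= e ->
  1 + e / (x + 1) <= Rpower ((x + 1) / x) e.
Proof.
  intros Hx He. set (t := / (x + 1)).
  assert (Ht : 0 < t) by (apply Rinv_0_lt_compat; lra).
  assert (Hlow : x / (x + 1) <= exp (- t)).
  { replace (x / (x + 1)) with (1 + - t) by (unfold t; field; lra).
    apply exp_ineq1_le. }
  assert (Hexp : exp t <= (x + 1) / x).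
  { rewrite <- (Rinv_inv (exp t)), <- exp_Ropp.
    replace ((x + 1) / x) with (/ (x / (x + 1))) by (field; lra).
    apply Rinv_le_contravar; [apply Rdiv_lt_0_compat; lra | exact Hlow]. }
  assert (Hln : t <= ln ((x + 1) / x)).
  { rewrite <- (ln_exp t). apply ln_le_compat; [apply exp_pos | exact Hexp]. }
  unfold Rpower. eapply Rle_trans; [| apply exp_ineq1_le].
  apply Rplus_le_compat_l. unfold Rdiv at 1. fold t. apply Rmult_le_compat_l; lra.
Qed.

(* Discrete derivative of (x + a)^g, weighted by x: with y = x + a,
   (y+1)^g = y^g exp(g D) where D = ln (1 + 1/y) <= 1/y <= 1/a, so
   x ((y+1)^g - y^g) <= y y^g g D exp(g D) <= g exp(g/a) y^g. *)
Lemma Rpower_increment x a g : 0 <= g -> 0 < a -> 0 <= x ->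
  x * (Rpower (x + a + 1) g - Rpower (x + a) g) <= g * exp (g / a) * Rpower (x + a) g.
Proof.
  intros Hg Ha Hx.
  set (y := x + a). assert (Hy : 0 < y) by (unfold y; lra).
  assert (Hinv : 0 < / y) by (apply Rinv_0_lt_compat; exact Hy).
  set (D := ln (1 + / y)). set (u := Rpower y g).
  assert (Hu : 0 < u) by apply exp_pos.
  assert (Hsplit : Rpower (y + 1) g = u * exp (g * D)).
  { replace (y + 1) with (y * (1 + / y)) by (field; lra).
    rewrite <- Rpower_mult_distr by lra. reflexivity. }
  assert (HD : 0 <= D <= / y) by (apply ln_1p_bounds; lra).
  assert (HyD : y * D <= 1).
  { replace 1 with (y * / y) by (field; lra). apply Rmult_le_compat_l; lra. }
  assert (Hcap : exp (g * D) <= exp (g / a)).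
  { apply exp_le_compat. unfold Rdiv. apply Rmult_le_compat_l; [exact Hg |].
    apply Rle_trans with (/ y); [lra |]. apply Rinv_le_contravar; unfold y; lra. }
  assert (HgD : 0 <= g * D) by (apply Rmult_le_pos; lra).
  pose proof (exp_sub1_le (g * D) HgD) as Hconv.
  pose proof (exp_pos (g * D)) as HE.
  assert (Hstep : x * (exp (g * D) - 1) <= g * exp (g * D)).
  { apply Rle_trans with (y * (g * D * exp (g * D))).
    - apply Rle_trans with (x * (g * D * exp (g * D))); [apply Rmult_le_compat_l; lra |].
      apply Rmult_le_compat_r; [apply Rmult_le_pos |]; unfold y; lra.
    - replace (y * (g * D * exp (g * D))) with (g * exp (g * D) * (y * D)) by ring.
      rewrite <- (Rmult_1_r (g * exp (g * D))) at 2.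
      apply Rmult_le_compat_l; [apply Rmult_le_pos |]; lra. }
  rewrite Hsplit. fold u.
  replace (x * (u * exp (g * D) - u)) with (u * (x * (exp (g * D) - 1))) by ring.
  rewrite (Rmult_comm _ u). apply Rmult_le_compat_l; [lra |].
  apply Rle_trans with (g * exp (g * D)); [exact Hstep | apply Rmult_le_compat_l; lra].
Qed.

Definition sum_over {A : Type} (F : A -> R) (l : list A) : R :=
  fold_right (fun x acc => F x + acc) 0 l.

Lemma sum_over_cons {A : Type} (F : A -> R) x l :
  sum_over F (x :: l) = F x + sum_over F l.
Proof. reflexivity. Qed.

Lemma sum_over_app {A : Type} (F : A -> R) l1 l2 :
  sum_over F (l1 ++ l2) = sum_over F l1 + sum_over F l2.
Proof.
  induction l1 as [| x l IH]; [simpl; lra |].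
  rewrite <- app_comm_cons, !sum_over_cons, IH. ring.
Qed.

Lemma sum_over_flat_map {A B : Type} (F : B -> R) (f : A -> list B) l :
  sum_over F (flat_map f l) = sum_over (fun x => sum_over F (f x)) l.
Proof.
  induction l as [| x l IH]; simpl; [reflexivity |].
  rewrite sum_over_app, IH. reflexivity.
Qed.

Lemma sum_over_map {A B : Type} (F : B -> R) (f : A -> B) l :
  sum_over F (map f l) = sum_over (fun x => F (f x)) l.
Proof.
  induction l as [| x l IH]; [reflexivity |]. cbn [map]. rewrite !sum_over_cons, IH. reflexivity.
Qed.

Lemma sum_over_le {A : Type} (F G : A -> R) l :
  (forall x, In x l -> F x <= G x) -> sum_over F l <= sum_over G l.
Proof.
  induction l as [| x l IH]; intros Hle; simpl; [lra |].
  apply Rplus_le_compat; [apply Hle; left; reflexivity |].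
  apply IH. intros y Hy. apply Hle. right. exact Hy.
Qed.

Lemma sum_over_ext {A : Type} (F G : A -> R) l :
  (forall x, In x l -> F x = G x) -> sum_over F l = sum_over G l.
Proof.
  intros Heq. apply Rle_antisym; apply sum_over_le; intros x Hx; rewrite (Heq x Hx); lra.
Qed.

Lemma sum_over_scal {A : Type} (c : R) (F : A -> R) l :
  sum_over (fun x => c * F x) l = c * sum_over F l.
Proof.
  induction l as [| x l IH]; [simpl; lra |]. rewrite !sum_over_cons, IH. ring.
Qed.

Lemma map_nth_positions (s : list nat) :
  map (fun i => nth i s 0%nat) (seq 0 (length s)) = s.
Proof.
  induction s as [| x s IH]; simpl; [reflexivity |]. f_equal.
  rewrite <- seq_shift, map_map. exact IH.
Qed.

(* Summing over the positions 1..|s| of a list is summing over its entries: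
   a uniform choice of an earlier index picks the label pi(u). *)
Lemma sum_over_positions (F : nat -> R) (s : list nat) :
  sum_over (fun u => F (nth (u - 1) s 0%nat)) (seq 1 (length s)) = sum_over F s.
Proof.
  rewrite <- seq_shift, sum_over_map.
  rewrite <- (map_nth_positions s) at 2. rewrite sum_over_map.
  apply sum_over_ext. intros i _. simpl. rewrite Nat.sub_0_r. reflexivity.
Qed.

Lemma sum_over_indicator (j : nat) (A B : R) (s : list nat) :
  sum_over (fun x => if Nat.eq_dec x j then A else B) s
  = INR (count_occ Nat.eq_dec s j) * A
    + (INR (length s) - INR (count_occ Nat.eq_dec s j)) * B.
Proof.
  induction s as [| x s IH]; [simpl; lra |].
  rewrite sum_over_cons, IH. cbn [count_occ length].
  destruct (Nat.eq_dec x j); rewrite ?S_INR; lra.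
Qed.

Definition expect (f : list nat -> R) (d : list (R * list nat)) : R :=
  sum_over (fun ws => fst ws * f (snd ws)) d.

Definition simon_branch (p : R) (ws : R * list nat) : list (R * list nat) :=
  let (w, s) := ws in
  let i := S (length s) in
  (w * (1 - p), s ++ [i])
    :: map (fun u => (w * (p / INR (length s)), s ++ [nth (u - 1) s 0%nat]))
           (seq 1 (length s)).

Lemma expect_simon_step f p d :
  expect f (simon_step p d) = sum_over (fun ws => expect f (simon_branch p ws)) d.
Proof. apply sum_over_flat_map. Qed.

Lemma simon_law_succ p n : (1 <= n)%nat ->
  simon_law p (S n) = simon_step p (simon_law p n).
Proof.
  intros Hn. unfold simon_law. replace (S n - 1)%nat with (S (n - 1)) by lia. reflexivity.
Qed.

Lemma simon_step_extends p d w' s' :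
  In (w', s') (simon_step p d) ->
  exists w s x, In (w, s) d /\ s' = s ++ [x] /\
    (x = S (length s) \/ In x s) /\ (w' = w * (1 - p) \/ w' = w * (p / INR (length s))).
Proof.
  intros Hin. apply in_flat_map in Hin as [[w s] [Hd Hbr]].
  exists w, s. simpl in Hbr. destruct Hbr as [Heq | Hmap].
  - injection Heq as <- <-. exists (S (length s)). auto.
  - apply in_map_iff in Hmap as [u [Heq Hu]]. injection Heq as <- <-.
    apply in_seq in Hu. exists (nth (u - 1) s 0%nat).
    repeat split; auto. right. apply nth_In. lia.
Qed.

Lemma simon_law_support p n w s : 0 <= p <= 1 -> (1 <= n)%nat ->
  In (w, s) (simon_law p n) ->
  0 <= w /\ length s = n /\ (forall x, In x s -> (x <= n)%nat).
Proof.
  intros Hp Hn. revert w s. induction Hn as [| n Hn IH]; intros w s Hin.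
  - destruct Hin as [Heq | []]. injection Heq as <- <-.
    split; [lra |]. split; [reflexivity |]. intros x [<- | []]; lia.
  - rewrite simon_law_succ in Hin by exact Hn.
    apply simon_step_extends in Hin as (w0 & s0 & x & Hd & -> & Hx & Hw).
    destruct (IH w0 s0 Hd) as (Hw0 & Hlen & Hle).
    assert (HK : 0 < INR (length s0)) by (apply lt_0_INR; lia).
    split; [| split].
    + destruct Hw as [-> | ->]; [nra |].
      apply Rmult_le_pos; [exact Hw0 |].
      apply Rmult_le_pos; [lra | left; apply Rinv_0_lt_compat; exact HK].
    + rewrite length_app, Hlen. simpl. lia.
    + intros y Hy. apply in_app_or in Hy as [Hy | [<- | []]].
      * specialize (Hle y Hy). lia.
      * destruct Hx as [-> | Hx]; [lia |]. specialize (Hle x Hx). lia.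
Qed.

Lemma Ncount_snoc j s x :
  Ncount j (s ++ [x]) = (Ncount j s + (if Nat.eq_dec x j then 1 else 0))%nat.
Proof. unfold Ncount. rewrite count_occ_app. simpl. destruct (Nat.eq_dec x j); reflexivity. Qed.

Lemma expect_branch_Ncount (h : nat -> R) j p w s :
  let N := Ncount j s in
  expect (fun t => h (Ncount j t)) (simon_branch p (w, s))
  = w * (1 - p) * h (Ncount j (s ++ [S (length s)]))
    + w * (p / INR (length s)) * (INR N * h (S N) + (INR (length s) - INR N) * h N).
Proof.
  intros N. unfold expect, simon_branch.
  rewrite sum_over_cons, sum_over_map. cbn [fst snd].
  rewrite (sum_over_positions (fun x => w * (p / INR (length s)) * h (Ncount j (s ++ [x])))).
  rewrite sum_over_scal.
  rewrite (sum_over_ext _ (fun x => if Nat.eq_dec x j then h (S N) else h N)).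
  - rewrite sum_over_indicator. unfold N, Ncount. ring.
  - intros x _. rewrite Ncount_snoc. fold N.
    destruct (Nat.eq_dec x j); f_equal; lia.
Qed.

Lemma expect_mono (f f' : list nat -> R) d :
  (forall w s, In (w, s) d -> 0 <= w /\ f s <= f' s) -> expect f d <= expect f' d.
Proof.
  intros Hle. apply sum_over_le. intros [w s] Hin. simpl.
  destruct (Hle w s Hin) as [Hw Hf]. apply Rmult_le_compat_l; assumption.
Qed.

Lemma expect_const c d : expect (fun _ => c) d = c * expect (fun _ => 1) d.
Proof.
  unfold expect. rewrite <- sum_over_scal. apply sum_over_ext. intros ws _. ring.
Qed.

Lemma simon_law_mass p n : 0 <= p <= 1 -> (1 <= n)%nat ->
  expect (fun _ => 1) (simon_law p n) = 1.
Proof.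
  intros Hp Hn. induction Hn as [| n Hn IH]; [unfold expect, sum_over; simpl; ring |].
  rewrite simon_law_succ, expect_simon_step by exact Hn.
  transitivity (expect (fun _ => 1) (simon_law p n)); [| exact IH].
  apply sum_over_ext. intros [w s] Hin.
  destruct (simon_law_support p n w s Hp Hn Hin) as (_ & Hlen & _).
  assert (HK : 0 < INR (length s)) by (apply lt_0_INR; lia).
  pose proof (expect_branch_Ncount (fun _ => 1) 0 p w s) as Hbranch.
  cbv beta zeta in Hbranch. rewrite Hbranch. simpl. field. lra.
Qed.

(* Up to time j the label j occurs at most once: all earlier labels are < j. *)
Lemma Ncount_early p n j w s : 0 <= p <= 1 -> (1 <= n)%nat -> (n <= j)%nat ->
  In (w, s) (simon_law p n) -> (Ncount j s <= 1)%nat.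
Proof.
  intros Hp Hn Hnj Hin. destruct (Nat.eq_dec n 1) as [-> | Hn1].
  - destruct (simon_law_support p 1 w s Hp Hn Hin) as (_ & Hlen & _).
    rewrite <- Hlen. apply count_occ_bound.
  - destruct n as [| m]; [lia |].
    rewrite simon_law_succ in Hin by lia.
    apply simon_step_extends in Hin as (w0 & s0 & x & Hd & -> & _ & _).
    destruct (simon_law_support p m w0 s0 Hp ltac:(lia) Hd) as (_ & _ & Hle).
    assert (H0 : Ncount j s0 = 0%nat).
    { apply count_occ_not_In. intros Hj. specialize (Hle j Hj). lia. }
    rewrite Ncount_snoc, H0. destruct (Nat.eq_dec x j); lia.
Qed.

Section Potential.

Variables p g : R.
Hypothesis hp : 0 < p < 1.
Hypothesis hg : 0 < g.
Hypothesis hpg : p * g < 1.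

Definition growth_exponent : R := (p * g + 1) / 2.
Definition shift : R := g / ln (growth_exponent / (p * g)).
Definition potential (N : nat) : R := Rpower (INR N + shift) g.
Definition potential_bound : R := Rpower (1 + shift) g.

Let hp01 : 0 <= p <= 1.
Proof. lra. Qed.

Let eta := growth_exponent.

Lemma growth_exponent_bounds : 0 < growth_exponent < 1.
Proof. unfold growth_exponent. assert (0 < p * g) by nra. lra. Qed.

(* The shift is chosen so that p g exp(g / shift) = eta, which is possible
   because eta > p g. *)
Lemma shift_spec : 0 < shift /\ p * g * exp (g / shift) = growth_exponent.
Proof.
  assert (Hpg : 0 < p * g) by nra.
  assert (Hratio : 1 < growth_exponent / (p * g)).
  { apply Rmult_lt_reg_r with (p * g); [exact Hpg |].
    unfold Rdiv. rewrite Rmult_assoc, Rinv_l by lra. unfold growth_exponent. lra. }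
  assert (Hln : 0 < ln (growth_exponent / (p * g))).
  { rewrite <- ln_1. apply ln_increasing; lra. }
  split.
  - apply Rdiv_lt_0_compat; lra.
  - unfold shift. replace (g / (g / ln (growth_exponent / (p * g))))
      with (ln (growth_exponent / (p * g))) by (field; lra).
    rewrite exp_ln by lra. field. lra.
Qed.

Lemma potential_drift N :
  p * INR N * (potential (S N) - potential N) <= eta * potential N.
Proof.
  destruct shift_spec as [Hshift Hexp].
  pose proof (Rpower_increment (INR N) shift g ltac:(lra) Hshift (pos_INR N)) as Hinc.
  unfold eta, potential. rewrite S_INR, <- Hexp.
  replace (INR N + 1 + shift) with (INR N + shift + 1) by ring.
  replace (p * g * exp (g / shift) * Rpower (INR N + shift) g)
    with (p * (g * exp (g / shift) * Rpower (INR N + shift) g)) by ring.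
  rewrite Rmult_assoc. apply Rmult_le_compat_l; [lra | exact Hinc].
Qed.

Lemma rpow_le_potential N : rpow (INR N) g <= potential N.
Proof.
  destruct shift_spec as [Hshift _]. unfold rpow.
  destruct (Rle_dec (INR N) 0) as [_ | Hpos].
  - left; apply exp_pos.
  - apply Rle_Rpower_l; lra.
Qed.

Lemma potential_le_bound N : (N <= 1)%nat -> potential N <= potential_bound.
Proof.
  intros HN. destruct shift_spec as [Hshift _].
  apply le_INR in HN. pose proof (pos_INR N).
  apply Rle_Rpower_l; simpl in HN; lra.
Qed.

Definition expect_potential (n j : nat) : R :=
  expect (fun s => potential (Ncount j s)) (simon_law p n).

Lemma expect_Npow_le_potential n j : (1 <= n)%nat ->
  expect_Npow p n j g <= expect_potential n j.
Proof.
  intros Hn.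
  change (expect (fun s => rpow (INR (Ncount j s)) g) (simon_law p n)
          <= expect_potential n j).
  apply expect_mono. intros w s Hin. split.
  - apply (simon_law_support p n w s hp01 Hn Hin).
  - apply rpow_le_potential.
Qed.

Lemma expect_potential_early n j : (1 <= n)%nat -> (n <= j)%nat ->
  expect_potential n j <= potential_bound.
Proof.
  intros Hn Hnj. unfold expect_potential.
  apply Rle_trans with (expect (fun _ => potential_bound) (simon_law p n)).
  - apply expect_mono. intros w s Hin. split.
    + apply (simon_law_support p n w s hp01 Hn Hin).
    + apply potential_le_bound, (Ncount_early p n j w s hp01 Hn Hnj Hin).
  - rewrite expect_const, simon_law_mass by assumption. lra.
Qed.

Lemma expect_potential_drift n j : (1 <= j)%nat -> (j <= n)%nat ->
  expect_potential (S n) j <= (1 + eta / INR n) * expect_potential n j.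
Proof.
  intros Hj Hjn. unfold expect_potential.
  rewrite simon_law_succ, expect_simon_step by lia.
  unfold expect at 2. rewrite <- sum_over_scal.
  apply sum_over_le. intros [w s] Hin. cbn [fst snd].
  destruct (simon_law_support p n w s hp01 ltac:(lia) Hin) as (Hw & Hlen & _).
  rewrite expect_branch_Ncount, Ncount_snoc, Hlen.
  destruct (Nat.eq_dec (S n) j) as [Heq | _]; [lia |]. rewrite Nat.add_0_r.
  assert (Hn : 0 < INR n) by (apply lt_0_INR; lia).
  set (N := Ncount j s).
  replace (w * (1 - p) * potential N
           + w * (p / INR n) * (INR N * potential (S N) + (INR n - INR N) * potential N))
    with (w * potential N + (w / INR n) * (p * INR N * (potential (S N) - potential N)))
    by (field; lra).
  replace ((1 + eta / INR n) * (w * potential N))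
    with (w * potential N + (w / INR n) * (eta * potential N)) by (field; lra).
  apply Rplus_le_compat_l, Rmult_le_compat_l; [| apply potential_drift].
  apply Rmult_le_pos; [exact Hw | left; apply Rinv_0_lt_compat; exact Hn].
Qed.

(* Iterating the drift from time j, using 1 + eta/(n+1) <= ((n+1)/n)^eta. *)
Lemma expect_potential_growth n j : (1 <= j)%nat -> (j <= n)%nat ->
  expect_potential (S n) j
  <= potential_bound * (1 + eta / INR j) * Rpower (INR n / INR j) eta.
Proof.
  intros Hj Hjn. pose proof growth_exponent_bounds as Heta. fold eta in Heta.
  assert (HJ : 0 < INR j) by (apply lt_0_INR; lia).
  assert (Hfactor : 0 <= 1 + eta / INR j)
    by (assert (0 < eta / INR j) by (apply Rdiv_lt_0_compat; lra); lra).
  assert (HB : 0 < potential_bound) by apply exp_pos.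
  induction Hjn as [| n Hjn IH].
  - rewrite Rdiv_diag, Rpower_one_base by lra. rewrite Rmult_1_r, Rmult_comm.
    eapply Rle_trans; [apply expect_potential_drift; lia |].
    apply Rmult_le_compat_l; [exact Hfactor | apply expect_potential_early; lia].
  - assert (Hn : 0 < INR n) by (apply lt_0_INR; lia).
    assert (Hstep : 1 + eta / (INR n + 1) <= Rpower ((INR n + 1) / INR n) eta)
      by (apply Rpower_succ_ratio; lra).
    assert (Hsplit : Rpower (INR (S n) / INR j) eta
                     = Rpower (INR n / INR j) eta * Rpower ((INR n + 1) / INR n) eta).
    { rewrite Rpower_mult_distr by (apply Rdiv_lt_0_compat; lra).
      f_equal. rewrite S_INR. field. lra. }
    assert (HR : 0 <= Rpower (INR n / INR j) eta) by (left; apply exp_pos).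
    eapply Rle_trans; [apply expect_potential_drift; lia |].
    rewrite Hsplit, S_INR.
    apply Rle_trans with ((1 + eta / (INR n + 1))
                          * (potential_bound * (1 + eta / INR j) * Rpower (INR n / INR j) eta)).
    + apply Rmult_le_compat_l; [| exact IH].
      assert (0 < eta / (INR n + 1)) by (apply Rdiv_lt_0_compat; lra). lra.
    + rewrite Rmult_comm, Rmult_assoc. apply Rmult_le_compat_l; [nra |].
      apply Rmult_le_compat_l; [exact HR | exact Hstep].
Qed.

Lemma expect_Npow_bound n j : (1 <= j)%nat -> (j <= n)%nat ->
  expect_Npow p n j g <= 2 * potential_bound * Rpower (INR n / INR j) eta.
Proof.
  intros Hj Hjn. pose proof growth_exponent_bounds as Heta. fold eta in Heta.
  assert (HB : 0 < potential_bound) by apply exp_pos.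
  assert (HJ : 0 < INR j) by (apply lt_0_INR; lia).
  eapply Rle_trans; [apply expect_Npow_le_potential; lia |].
  destruct (Nat.eq_dec n j) as [-> | Hne].
  - rewrite Rdiv_diag, Rpower_one_base by lra.
    eapply Rle_trans; [apply expect_potential_early; lia | lra].
  - destruct n as [| m]; [lia |].
    eapply Rle_trans; [apply expect_potential_growth; lia |].
    assert (Hsmall : eta / INR j <= 1).
    { apply le_INR in Hj. simpl in Hj.
      unfold Rdiv. rewrite <- (Rinv_r (INR j)) by lra.
      apply Rmult_le_compat_r; [left; apply Rinv_0_lt_compat |]; lra. }
    assert (0 < eta / INR j) by (apply Rdiv_lt_0_compat; lra).
    assert (Hmono : Rpower (INR m / INR j) eta <= Rpower (INR (S m) / INR j) eta).
    { apply Rle_Rpower_l; [lra |]. rewrite S_INR.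
      assert (0 < INR m) by (apply lt_0_INR; lia).
      split; [apply Rdiv_lt_0_compat; lra |].
      unfold Rdiv. apply Rmult_le_compat_r; [left; apply Rinv_0_lt_compat |]; lra. }
    assert (HR : 0 <= Rpower (INR m / INR j) eta) by (left; apply exp_pos).
    apply Rmult_le_compat; [nra | exact HR | nra | exact Hmono].
Qed.

End Potential.

Theorem lemma5 (p gamma : R) (hp : 0 < p < 1) (hg : 1 < gamma < 1 / p) :
  exists c eta : R, 0 < c /\ 0 < eta < 1 /\
    forall j n : nat, (1 <= j)%nat -> (j <= n)%nat ->
      expect_Npow p n j gamma <= c * Rpower (INR n / INR j) eta.
Proof.
  assert (hg0 : 0 < gamma) by lra.
  assert (hpg : p * gamma < 1).
  { destruct hg as [_ Hlt]. apply (Rmult_lt_compat_l p) in Hlt; [| lra].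
    replace (p * (1 / p)) with 1 in Hlt by (field; lra). exact Hlt. }
  exists (2 * potential_bound p gamma), (growth_exponent p gamma).
  split; [apply Rmult_lt_0_compat; [lra | apply exp_pos] |].
  split; [exact (growth_exponent_bounds p gamma hp hg0 hpg) |].
  intros j n Hj Hjn. exact (expect_Npow_bound p gamma hp hg0 hpg n j Hj Hjn).
Qed.
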